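(* $\mathfrak{L}(\mathbf{H})^w_{O(n)} \subsetneq \mathfrak{L}(SL(3,\mathbb{Z}))^w_{O(n)}$.
   Context: For a group $G$ with identity $e$, a $G$-automaton is a tuple $(Q,\Sigma,G,\delta,q_0,Q_a)$ where $Q$ is a finite set of states, $\Sigma$ a finite input alphabet, $q_0\in Q$ the initial state, $Q_a\subseteq Q$ the accepting states, and $\delta$ assigns to each $(q,\sigma)\in Q\times(\Sigma\cup\{\varepsilon\})$ a finite set of pairs $(q',m)\in Q\times G$. The register holds an element of $G$, initially $e$; using a transition $(q',m)\in\delta(q,\sigma)$ (one step) the automaton reads $\sigma$ (or nothing), moves to $q'$ and replaces the register content $x$ by $xm$. A word is accepted if some computation reads it entirely and ends in an accepting state with register equal to $e$. A $G$-automaton recognizing $\mathtt{L}$ is weakly $t(n)$ time-bounded if every $x\in\mathtt{L}$ with $|x|=n$ has an accepting computation of at most $t(n)$ steps; $\mathfrak{L}(G)^w_{O(n)}$ is the class of languages recognized by weakly $t(n)$ time-bounded $G$-automata for some $t(n)=O(n)$. $\mathbf{H}$ is the discrete Heisenberg group of $3\times3$ upper unitriangular integer matrices (presentation $\langle a,b\mid ab=bac, ac=ca, bc=cb\rangle$, $c=a^{-1}b^{-1}ab$); $SL(3,\mathbb{Z})$ is the group of $3\times3$ integer matrices of determinant $1$. *)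

From HB Require Import structures.
From mathcomp Require Import all_boot all_order all_algebra.
Set Implicit Arguments. Unset Strict Implicit. Unset Printing Implicit Defensive.
Import Order.TTheory GRing.Theory Num.Theory.

Local Open Scope ring_scope.

Definition mx3 := 'M[int]_3.

Definition heisenberg (m : mx3) : bool :=
  [forall i : 'I_3, forall j : 'I_3,
     ((j < i)%N ==> (m i j == 0)) && ((i == j) ==> (m i j == 1))].

Definition sl3Z (m : mx3) : bool := \det m == 1.

(* A G-automaton over alphabet Sigma with register in 3x3 integer matrices.
   A transition (q, s, q', m) : from q, reading s (None = epsilon),
   go to q' and multiply the register on the right by m. *)
Record gauto (Sigma : finType) := GAuto {
  gstate : finType;
  ginit : gstate;
  gacc : pred gstate;
  gdelta : seq (gstate * option Sigma * gstate * mx3)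
}.

Section Runs.
Variables (Sigma : finType) (A : gauto Sigma).

Fixpoint chain_from (q : gstate A)
    (p : seq (gstate A * option Sigma * gstate A * mx3)) : bool :=
  match p with
  | [::] => @gacc Sigma A q
  | t :: p' => (t.1.1.1 == q) && chain_from t.1.2 p'
  end.

Definition accepting_comp (w : seq Sigma)
    (p : seq (gstate A * option Sigma * gstate A * mx3)) : Prop :=
  [/\ all (fun t => t \in @gdelta Sigma A) p,
      chain_from (@ginit Sigma A) p,
      pmap (fun t => t.1.1.2) p = w &
      foldl (fun x t => x *m t.2) 1%:M p = 1%:M].

Definition accepts (w : seq Sigma) : Prop := exists p, accepting_comp w p.
End Runs.

(* L is in L(G)^w_{O(n)}: recognized by a G-automaton (all transition labels
   in G) admitting a linear time bound t(n) <= c*n + c for words of L. *)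
Definition in_weak_linear_class (G : pred mx3) (Sigma : finType)
    (L : seq Sigma -> Prop) : Prop :=
  exists A : gauto Sigma,
    (forall t, t \in @gdelta Sigma A -> G t.2) /\
    (forall w, L w <-> @accepts Sigma A w) /\
    exists c : nat, forall w, L w ->
      exists p, @accepting_comp Sigma A w p /\ (size p <= c * size w + c)%N.

From mathcomp Require Import all_boot all_order all_algebra.
From mathcomp Require Import zify ring.
From Stdlib Require Import IndefiniteDescription.
Set Implicit Arguments. Unset Strict Implicit. Unset Printing Implicit Defensive.
Import Order.TTheory GRing.Theory Num.Theory.

(* Heisenberg matrices have determinant 1, which gives the inclusion.  For
   strictness, x = 1 + e01 and y = 1 + e10 generate a free monoid in SL(3,Z),
   so the word problem of x, y and their inverses is recognised in real time by
   a one-state SL(3,Z)-automaton, and among the words u u'^-1 with u, u'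
   positive of length n it accepts exactly those with u = u'.  A Heisenberg
   automaton accepting u u^-1 in K = O(n) steps reaches, after reading u, a
   configuration whose register has off-diagonal entries O(K) and corner entry
   O(K^2); by cut-and-paste this configuration determines u, yet there are only
   polynomially many such configurations against 2^n words u. *)

Lemma exp2_gt_poly (E d : nat) : exists n, E * n.+1 ^ d < 2 ^ n.
Proof.
(* With n = 2Dt: (n + 1)^d <= (3Dt)^D, while 2^n > t^(2D) > E (3D)^D t^D. *)
set D := d.+1; set t := ((3 * D) ^ D * E).+1.
exists (2 * D * t).
have le_pow : (2 * D * t).+1 ^ d <= (3 * D * t) ^ D.
  apply: leq_trans (leq_pexp2l _ (leqnSn d)) _ => //.
  by rewrite leq_exp2r //; nia.
have t_le_pow : t <= t ^ D by rewrite -{1}(expn1 t) leq_pexp2l.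
have pow_lt : t ^ (D + D) < 2 ^ (2 * D * t).
  have -> : 2 * D * t = t * (D + D) by rewrite mulnC mul2n addnn.
  by rewrite expnM ltn_exp2r ?addn_gt0 // ltn_expl.
apply: leq_ltn_trans (leq_mul (leqnn E) le_pow) _.
apply: ltn_trans pow_lt; rewrite expnD expnMn mulnA ltn_pmul2r ?expn_gt0 //.
by apply: leq_trans t_le_pow; rewrite mulnC.
Qed.

Lemma leq_card_rel (T T' : finType) (R : T -> T' -> Prop) :
  (forall x, exists y, R x y) -> (forall x x' y, R x y -> R x' y -> x = x') ->
  #|T| <= #|T'|.
Proof.
move=> /functional_choice [f Rf] R_inj.
by apply: (@leq_card _ _ f) => x x' fx; apply: (R_inj x x' (f x)); rewrite // fx.
Qed.

Lemma code_size_poly (a n s : nat) :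
  s <= a * n.+1 -> (2 * (s + s ^ 2)).+1 ^ 3 <= (2 * (a + a ^ 2)).+1 ^ 3 * n.+1 ^ 6.
Proof.
move=> le_s.
have le_base : (2 * (s + s ^ 2)).+1 <= (2 * (a + a ^ 2)).+1 * n.+1 ^ 2 by nia.
by rewrite (_ : 6 = 2 * 3) // expnM -expnMn leq_exp2r.
Qed.

Local Open Scope ring_scope.

Definition i0 : 'I_3 := @Ordinal 3 0 isT.
Definition i1 : 'I_3 := @Ordinal 3 1 isT.
Definition i2 : 'I_3 := @Ordinal 3 2 isT.

Lemma ord3P (i : 'I_3) : [\/ i = i0, i = i1 | i = i2].
Proof.
case: i => [[|[|[|k]]] lt_i3] //.
- by apply: Or31; apply: val_inj.
- by apply: Or32; apply: val_inj.
- by apply: Or33; apply: val_inj.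
Qed.

Lemma mul3E (R : pzSemiRingType) (A B : 'M[R]_3) i j :
  (A *m B) i j = A i i0 * B i0 j + A i i1 * B i1 j + A i i2 * B i2 j.
Proof.
rewrite mxE !big_ord_recl big_ord0 addr0 addrA.
by congr (A i _ * B _ j + A i _ * B _ j + A i _ * B _ j); apply: val_inj.
Qed.

Definition heis (a b c : int) : mx3 :=
  1%:M + a *: delta_mx i0 i1 + b *: delta_mx i1 i2 + c *: delta_mx i0 i2.

Lemma heisE (m : mx3) : heisenberg m -> m = heis (m i0 i1) (m i1 i2) (m i0 i2).
Proof.
move=> /forallP m_heis.
have low (i j : 'I_3) : (j < i)%N -> m i j = 0.
  by move=> lt_ji; have /forallP/(_ j)/andP[/implyP/(_ lt_ji)/eqP] := m_heis i.
have diag (i : 'I_3) : m i i = 1.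
  by have /forallP/(_ i)/andP[_ /implyP/(_ (eqxx i))/eqP] := m_heis i.
apply/matrixP => i j.
by case: (ord3P i) => ->; case: (ord3P j) => ->;
  rewrite !mxE /= ?diag ?(low i1 i0) ?(low i2 i0) ?(low i2 i1) //; ring.
Qed.

Lemma heis_mul a b c a' b' c' :
  heis a b c *m heis a' b' c' = heis (a + a') (b + b') (c + c' + a * b').
Proof.
apply/matrixP => i j; rewrite mul3E.
by case: (ord3P i) => ->; case: (ord3P j) => ->; rewrite !mxE /=; ring.
Qed.

Lemma heis0 : heis 0 0 0 = 1%:M.
Proof. by rewrite /heis !scale0r !addr0. Qed.

Lemma det_heis a b c : \det (heis a b c) = 1.
Proof.
rewrite -det_tr det_trig.
  by apply: big1 => i _; case: (ord3P i) => ->; rewrite !mxE /= ?mulr0 ?addr0.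
apply/is_trig_mxP => i j; rewrite mxE.
by case: (ord3P i) => ->; case: (ord3P j) => ->; rewrite !mxE /= ?mulr0 ?addr0.
Qed.

Lemma heisenberg_det (m : mx3) : heisenberg m -> \det m = 1.
Proof. by move/heisE ->; apply: det_heis. Qed.

Lemma heis_entries a b c :
  [/\ heis a b c i0 i1 = a, heis a b c i1 i2 = b & heis a b c i0 i2 = c].
Proof. by rewrite !mxE /=; split; ring. Qed.

Definition heis_bounded (N : nat) (m : mx3) : Prop :=
  exists a b c, [/\ m = heis a b c, (absz a <= N)%N, (absz b <= N)%N
                  & (absz c <= N + N ^ 2)%N].

Lemma heis_bounded_le N N' m :
  (N <= N')%N -> heis_bounded N m -> heis_bounded N' m.
Proof.
move=> le_N [a [b [c [-> ba bb bc]]]]; exists a, b, c.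
by split=> //; [lia | lia | nia].
Qed.

Lemma heis_bounded1 : heis_bounded 0 1%:M.
Proof. by exists 0, 0, 0; rewrite heis0. Qed.

Lemma heis_bounded_mul N N' m m' :
  heis_bounded N m -> heis_bounded N' m' -> heis_bounded (N + N') (m *m m').
Proof.
move=> [a [b [c [-> ba bb bc]]]] [a' [b' [c' [-> ba' bb' bc']]]].
exists (a + a'), (b + b'), (c + c' + a * b'); rewrite heis_mul.
by split=> //; [lia | lia | nia].
Qed.

Lemma heis_bounded_prod N (ms : seq mx3) :
  (forall m, m \in ms -> heis_bounded N m) ->
  heis_bounded (size ms * N) (foldl mulmx 1%:M ms).
Proof.
elim/last_ind: ms => [|ms m IH] ms_bounded; first exact: heis_bounded1.
rewrite foldl_rcons size_rcons mulSnr.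
apply: heis_bounded_mul; last by apply: ms_bounded; rewrite mem_rcons mem_head.
by apply: IH => m' m'_ms; apply: ms_bounded; rewrite mem_rcons inE m'_ms orbT.
Qed.

Definition heis_size (m : mx3) : nat :=
  (absz (m i0 i1) + absz (m i1 i2) + absz (m i0 i2))%N.

Lemma heisenberg_bounded m : heisenberg m -> heis_bounded (heis_size m) m.
Proof.
move/heisE => m_heis; rewrite /heis_size m_heis.
have [-> -> ->] := heis_entries (m i0 i1) (m i1 i2) (m i0 i2).
by exists (m i0 i1), (m i1 i2), (m i0 i2); split=> //; lia.
Qed.

Definition code_int (N : nat) (z : int) : 'I_(2 * N).+1 := inord (absz (z + N%:Z)).

Lemma code_int_inj N a b : (absz a <= N)%N -> (absz b <= N)%N ->
  code_int N a = code_int N b -> a = b.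
Proof.
move=> ba bb /(congr1 (@nat_of_ord _)); rewrite /code_int !inordK; lia.
Qed.

Definition heis_code N (m : mx3) :=
  let B := (N + N ^ 2)%N in
  (code_int B (m i0 i1), code_int B (m i1 i2), code_int B (m i0 i2)).

Lemma heis_code_inj N m m' : heis_bounded N m -> heis_bounded N m' ->
  heis_code N m = heis_code N m' -> m = m'.
Proof.
move=> [a [b [c [-> ba bb bc]]]] [a' [b' [c' [-> ba' bb' bc']]]].
rewrite /heis_code /=.
have [-> -> ->] := heis_entries a b c; have [-> -> ->] := heis_entries a' b' c'.
have le_B x : (absz x <= N)%N -> (absz x <= N + N ^ 2)%N.
  by move/leq_trans; apply; apply: leq_addr.
case=> e_a e_b e_c.
by rewrite (code_int_inj (le_B _ ba) (le_B _ ba') e_a)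
  (code_int_inj (le_B _ bb) (le_B _ bb') e_b) (code_int_inj bc bc' e_c).
Qed.

Definition transvection (s : bool) : mx3 := heis ((-1) ^+ s) 0 0.

(* The letter (false, s) stands for x or x^-1, (true, s) for y or y^-1. *)
Definition gen (l : bool * bool) : mx3 :=
  if l.1 then (transvection l.2)^T else transvection l.2.

Lemma det_gen l : \det (gen l) = 1.
Proof. by case: l => [[] s]; rewrite /gen /transvection ?det_tr det_heis. Qed.

Lemma transvection_inv s : transvection s *m transvection (~~ s) = 1%:M.
Proof. by rewrite heis_mul; case: s; rewrite /= !addr0 ?mulr0 -heis0; congr heis; ring. Qed.

Lemma gen_inv b : gen (b, false) *m gen (b, true) = 1%:M.
Proof.
case: b; last exact: transvection_inv.
by rewrite /gen /= -trmx_mul transvection_inv trmx1.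
Qed.

Section WordEvaluation.
Variables (Sigma : finType) (g : Sigma -> mx3).

Definition mx_eval (w : seq Sigma) : mx3 := foldl (fun x a => x *m g a) 1%:M w.

Lemma foldl_mx_eval (x : mx3) w : foldl (fun x a => x *m g a) x w = x *m mx_eval w.
Proof.
rewrite /mx_eval; elim: w x => [|a w IH] x /=; first by rewrite mulmx1.
by rewrite IH [in RHS]IH mul1mx mulmxA.
Qed.

Lemma mx_eval_cat w w' : mx_eval (w ++ w') = mx_eval w *m mx_eval w'.
Proof. by rewrite /mx_eval foldl_cat foldl_mx_eval. Qed.

Lemma mx_eval_cons a w : mx_eval (a :: w) = g a *m mx_eval w.
Proof. by rewrite /mx_eval /= mul1mx foldl_mx_eval. Qed.

Lemma mx_eval_rcons w a : mx_eval (rcons w a) = mx_eval w *m g a.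
Proof. by rewrite /mx_eval foldl_rcons. Qed.

End WordEvaluation.

Definition pos (u : seq bool) : seq (bool * bool) := [seq (b, false) | b <- u].
Definition neg (u : seq bool) : seq (bool * bool) := [seq (b, true) | b <- u].
Definition Mpos (u : seq bool) : mx3 := mx_eval gen (pos u).

Lemma Mpos_rcons u b : Mpos (rcons u b) = Mpos u *m gen (b, false).
Proof. by rewrite /Mpos /pos map_rcons mx_eval_rcons. Qed.

(* Right multiplication by x adds column 0 to column 1 and y does the converse,
   so along a positive word both column sums of the upper-left 2x2 block stay
   positive and the larger one reveals the last letter. *)
Definition colsums (P : mx3) : int * int := (P i0 i0 + P i1 i0, P i0 i1 + P i1 i1).

Lemma colsums_gen P b : colsums (P *m gen (b, false)) =
  if b then ((colsums P).1 + (colsums P).2, (colsums P).2)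
  else ((colsums P).1, (colsums P).2 + (colsums P).1).
Proof. by case: b; rewrite /colsums !mul3E !mxE /=; congr pair; ring. Qed.

Lemma colsums_Mpos_gt0 u : 0 < (colsums (Mpos u)).1 /\ 0 < (colsums (Mpos u)).2.
Proof.
elim/last_ind: u => [|u b [gt0_s0 gt0_s1]]; first by rewrite /colsums !mxE.
by rewrite Mpos_rcons colsums_gen; case: b => /=; split=> //; apply: addr_gt0.
Qed.

Lemma colsums_Mpos_rcons u b :
  ((colsums (Mpos (rcons u b))).2 < (colsums (Mpos (rcons u b))).1) = b /\
  (colsums (Mpos (rcons u b))).1 != (colsums (Mpos (rcons u b))).2.
Proof.
have := colsums_Mpos_gt0 u; rewrite Mpos_rcons colsums_gen /colsums.
by case: b => /= -[]; split; lia.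
Qed.

Lemma colsums_Mpos_nil : (colsums (Mpos [::])).1 = (colsums (Mpos [::])).2.
Proof. by rewrite /colsums !mxE. Qed.

Lemma Mpos_inj : injective Mpos.
Proof.
elim/last_ind => [|u b IH] u'; case/lastP: u' => [|u' b'] // e_M.
- by have [_] := colsums_Mpos_rcons u' b'; rewrite -e_M colsums_Mpos_nil eqxx.
- by have [_] := colsums_Mpos_rcons u b; rewrite e_M colsums_Mpos_nil eqxx.
have e_b : b = b'.
  have [<- _] := colsums_Mpos_rcons u b; have [<- _] := colsums_Mpos_rcons u' b'.
  by rewrite e_M.
rewrite -e_b in e_M *; congr rcons; apply: IH.
move: e_M; rewrite !Mpos_rcons => /(congr1 (mulmx^~ (gen (b, true)))).
by rewrite -!mulmxA gen_inv !mulmx1.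
Qed.

Lemma Mpos_rev_neg u : Mpos u *m mx_eval gen (rev (neg u)) = 1%:M.
Proof.
elim: u => [|b u IH]; first by rewrite mul1mx.
rewrite /Mpos /= rev_cons mx_eval_cons mx_eval_rcons.
by rewrite mulmxA -(mulmxA (gen _)) IH mulmx1 gen_inv.
Qed.

Lemma mx_eval_pos_neg u v : mx_eval gen (pos u ++ rev (neg v)) = 1%:M <-> u = v.
Proof.
rewrite mx_eval_cat; split=> [uv1 | <-]; last exact: Mpos_rev_neg.
apply: Mpos_inj; have vv1 := mulmx1C (Mpos_rev_neg v).
by rewrite -[Mpos u]mulmx1 -vv1 mulmxA [Mpos u *m _]uv1 mul1mx.
Qed.

Section Computations.
Variables (Sigma : finType) (B : gauto Sigma).
Local Notation trans := (gstate B * option Sigma * gstate B * mx3)%type.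

Definition input (p : seq trans) : seq Sigma := pmap (fun t => t.1.1.2) p.

Definition register (p : seq trans) : mx3 := foldl (fun x t => x *m t.2) 1%:M p.

Fixpoint run_end (q : gstate B) (p : seq trans) : gstate B :=
  if p is t :: p' then run_end t.1.2 p' else q.

Fixpoint is_run (q : gstate B) (p : seq trans) : bool :=
  if p is t :: p' then (t.1.1.1 == q) && is_run t.1.2 p' else true.

Definition config (p : seq trans) : gstate B * mx3 := (run_end (ginit B) p, register p).

Lemma chain_from_cat q p1 p2 :
  chain_from q (p1 ++ p2) = is_run q p1 && chain_from (run_end q p1) p2.
Proof. by elim: p1 q => [|t p1 IH] q //=; rewrite IH andbA. Qed.

Lemma input_cat_split p x y : input p = x ++ y ->
  exists p1 p2, [/\ p = p1 ++ p2, input p1 = x & input p2 = y].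
Proof.
elim: p x => [|t p IH] x; first by case: x => [|a x] //; case: y; exists [::], [::].
case: t => [[[q [a|]] q'] m] /=.
- case: x => [|a' x] /=; first by exists [::], ((q, Some a, q', m) :: p).
  case=> <- /IH [p1 [p2 [-> in1 in2]]].
  by exists ((q, Some a, q', m) :: p1), p2; rewrite /input /= -/(input p1) in1.
- case/IH => [p1 [p2 [-> in1 in2]]].
  by exists ((q, None, q', m) :: p1), p2.
Qed.

Lemma accepting_comp_splice w w' p1 p2 p1' p2' :
  accepting_comp w (p1 ++ p2) -> accepting_comp w' (p1' ++ p2') ->
  config p1 = config p1' -> accepts B (input p1 ++ input p2').
Proof.
move=> [all12 ch12 _ _] [all12' ch12' _ reg12'] [e_end e_reg].
exists (p1 ++ p2'); split.
- by move: all12 all12'; rewrite !all_cat => /andP[-> _] /andP[_ ->].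
- by move: ch12 ch12'; rewrite !chain_from_cat e_end => /andP[-> _] /andP[_ ->].
- by rewrite pmap_cat.
- by rewrite foldl_cat -/(register p1) e_reg -foldl_cat; apply: reg12'.
Qed.

Lemma fooling_set_card (T C : finType) (code : gstate B * mx3 -> C)
    (x y : T -> seq Sigma) (K : nat) :
  (forall p p', all (fun t => t \in gdelta B) p -> all (fun t => t \in gdelta B) p' ->
     (size p <= K)%N -> (size p' <= K)%N ->
     code (config p) = code (config p') -> config p = config p') ->
  (forall u, exists2 p, @accepting_comp _ B (x u ++ y u) p & (size p <= K)%N) ->
  (forall u u', accepts B (x u ++ y u') -> u = u') ->
  (#|T| <= #|C|)%N.
Proof.
move=> code_inj short_comp fooling.
pose R u c := exists p1 p2, [/\ @accepting_comp _ B (x u ++ y u) (p1 ++ p2),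
  input p1 = x u, input p2 = y u, (size (p1 ++ p2) <= K)%N & code (config p1) = c].
apply: (@leq_card_rel T C R) => [u | u u' c].
  have [p acc_p size_p] := short_comp u; have [_ _ in_p _] := acc_p.
  have [p1 [p2 [e_p in1 in2]]] := input_cat_split in_p.
  by exists (code (config p1)), p1, p2; rewrite -e_p.
move=> [p1 [p2 [acc in1 _ size12 <-]]] [p1' [p2' [acc' _ in2' size12' e_code]]].
apply: fooling; rewrite -in1 -in2'; apply: (accepting_comp_splice acc acc').
have [[all12 _ _ _] [all12' _ _ _]] := (acc, acc').
move: all12 all12' size12 size12'; rewrite !all_cat !size_cat.
move=> /andP[all1 _] /andP[all1' _] size12 size12'.
by apply: code_inj => //; [apply: leq_trans size12 | apply: leq_trans size12'];
  apply: leq_addr.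
Qed.

End Computations.

Section WordProblem.
Variables (Sigma : finType) (g : Sigma -> mx3).

Definition word_problem_auto : gauto Sigma :=
  @GAuto Sigma unit tt predT [seq (tt, Some a, tt, g a) | a <- enum Sigma].

Local Notation trans :=
  (gstate word_problem_auto * option Sigma * gstate word_problem_auto * mx3)%type.

Definition word_problem_comp (w : seq Sigma) : seq trans :=
  [seq (tt, Some a, tt, g a) | a <- w].

Lemma foldl_word_problem (p : seq trans) (x : mx3) :
  all (fun t => t \in gdelta word_problem_auto) p ->
  foldl (fun x t => x *m t.2) x p = foldl (fun x a => x *m g a) x (input p).
Proof. by elim: p x => [|t p IH] x //= /andP[/mapP[a _ ->] /IH]. Qed.

Lemma word_problem_comp_accepting w :
  mx_eval g w = 1%:M -> accepting_comp w (word_problem_comp w).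
Proof.
have all_comp : all (fun t => t \in gdelta word_problem_auto) (word_problem_comp w).
  by apply/allP => t /mapP[a _ ->]; apply: map_f; rewrite mem_enum.
have input_comp : input (word_problem_comp w) = w by elim: w {all_comp} => //= a w ->.
move=> w1; split=> //; first by elim: w {w1 all_comp input_comp}.
by rewrite foldl_word_problem // input_comp.
Qed.

Lemma word_problem_autoP w : accepts word_problem_auto w <-> mx_eval g w = 1%:M.
Proof.
split=> [[p [all_p _ <- <-]] | /word_problem_comp_accepting acc_w].
  by rewrite foldl_word_problem.
by exists (word_problem_comp w).
Qed.

Lemma word_problem_linear (G : pred mx3) :
  (forall a, G (g a)) -> in_weak_linear_class G (fun w => mx_eval g w = 1%:M).
Proof.
move=> G_g; exists word_problem_auto; split; first by move=> t /mapP[a _ ->]; apply: G_g.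
split=> [w | ]; first by rewrite word_problem_autoP.
exists 1%N => w /word_problem_comp_accepting acc_w; exists (word_problem_comp w).
by rewrite size_map mul1n leq_addr.
Qed.

End WordProblem.

Section HeisenbergAutomata.
Variables (Sigma : finType) (B : gauto Sigma).
Hypothesis B_heis : forall t, t \in gdelta B -> heisenberg t.2.

Definition trans_size : nat := \max_(t <- gdelta B) heis_size t.2.

Lemma register_heis_bounded p :
  all (fun t => t \in gdelta B) p -> heis_bounded (size p * trans_size) (register p).
Proof.
move=> all_p.
have register_map x : foldl (fun x t => x *m t.2) x p = foldl mulmx x (map snd p).
  by elim: p x {all_p} => //=.
rewrite /register register_map -(size_map snd); apply: heis_bounded_prod.
move=> _ /mapP[t t_p ->]; have t_B := allP all_p t t_p.
apply: heis_bounded_le (heisenberg_bounded (B_heis t_B)).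
exact: leq_bigmax_seq.
Qed.

Lemma heis_code_register_inj K p p' :
  all (fun t => t \in gdelta B) p -> all (fun t => t \in gdelta B) p' ->
  (size p <= K)%N -> (size p' <= K)%N ->
  heis_code (K * trans_size) (register p) = heis_code (K * trans_size) (register p') ->
  register p = register p'.
Proof.
move=> all_p all_p' size_p size_p'; apply: heis_code_inj.
  by apply: heis_bounded_le (register_heis_bounded all_p); rewrite leq_mul2r size_p orbT.
by apply: heis_bounded_le (register_heis_bounded all_p'); rewrite leq_mul2r size_p' orbT.
Qed.

End HeisenbergAutomata.

Lemma word_problem_not_heis_linear :
  ~ in_weak_linear_class heisenberg (fun w => mx_eval gen w = 1%:M).
Proof.
case=> B [B_heis [B_lang [c B_linear]]].
set M := trans_size B; set a := (2 * c * M)%N.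
have [n lt_poly_exp] := exp2_gt_poly (#|gstate B| * (2 * (a + a ^ 2)).+1 ^ 3) 6.
set K := (c * (2 * n) + c)%N.
pose code (cfg : gstate B * mx3) := (cfg.1, heis_code (K * M) cfg.2).
have card_le : (2 ^ n <= #|gstate B| * (2 * (K * M + (K * M) ^ 2)).+1 ^ 3)%N.
  have := @fooling_set_card _ B (n.-tuple bool : finType) _ code
    (fun u => pos u) (fun u => rev (neg u)) K.
  have cube x : (x * x * x = x ^ 3)%N by rewrite !expnS expn0 muln1 mulnA.
  rewrite card_tuple card_bool !card_prod !card_ord cube; apply.
  - move=> p p' all_p all_p' size_p size_p' e_code.
    have /= e_end := congr1 fst e_code; have /= e_reg := congr1 snd e_code.
    have := heis_code_register_inj B_heis all_p all_p' size_p size_p' e_reg.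
    by rewrite /config e_end => ->.
  - move=> u; have /B_linear[p [acc_p size_p]] : mx_eval gen (pos u ++ rev (neg u)) = 1%:M.
      exact/mx_eval_pos_neg.
    exists p => //; move: size_p.
    by rewrite size_cat size_rev !size_map size_tuple addnn -mul2n.
  - by move=> u u' /B_lang /mx_eval_pos_neg /val_inj.
have K_le : (K <= 2 * c * n.+1)%N by rewrite /K; lia.
have KM_le : (K * M <= a * n.+1)%N by rewrite /a mulnAC leq_mul2r K_le orbT.
have := leq_trans card_le (leq_mul (leqnn _) (code_size_poly KM_le)).
by rewrite mulnA leqNgt lt_poly_exp.
Qed.

Theorem theorem4p9 :
  (forall (Sigma : finType) (L : seq Sigma -> Prop),
     in_weak_linear_class heisenberg L -> in_weak_linear_class sl3Z L) /\
  (exists (Sigma : finType) (L : seq Sigma -> Prop),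
     in_weak_linear_class sl3Z L /\ ~ in_weak_linear_class heisenberg L).
Proof.
split.
- move=> Sigma L [A [A_heis A_lang]]; exists A; split=> // t t_A.
  exact/eqP/heisenberg_det/A_heis.
- exists ((bool * bool)%type : finType), (fun w => mx_eval gen w = 1%:M); split.
    by apply: word_problem_linear => l; apply/eqP/det_gen.
  exact: word_problem_not_heis_linear.
Qed.
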